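(* There is a full and faithful functor \(\mathbf{HGraph}\hookrightarrow\mathbf{FHGraph}\).
   Context: A hypergraph is a pair \((A,H)\) with \(H\subseteq\mathcal{P}(A)\); a map of hypergraphs \((A,H)\to(A',H')\) is a function \(f\colon A\to A'\) with \(f(U)\in H'\) for all \(U\in H\); these form \(\mathbf{HGraph}\). An F-hypergraph is a pair \((A,H)\) with \(H\subseteq A\times\mathcal{P}(A)\) (hyperedges \((a,U)\)); a map of F-hypergraphs \((A,H)\to(A',H')\) is a function \(f\colon A\to A'\) with \((f(a),f(V))\in H'\) for all \((a,V)\in H\); these form \(\mathbf{FHGraph}\). *)

From mathcomp Require Import all_boot.
From mathcomp Require Export classical_sets.
Set Implicit Arguments. Unset Strict Implicit. Unset Printing Implicit Defensive.
Local Open Scope classical_set_scope.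

Record hgraph := HGraph { hg_carrier : Type; hg_edges : set (set hg_carrier) }.
Arguments hg_edges : clear implicits.

Record hgraph_hom (X Y : hgraph) := HGHom {
  hgh_fun :> hg_carrier X -> hg_carrier Y;
  hgh_prop : forall U, hg_edges X U -> hg_edges Y (hgh_fun @` U) }.

Record fhgraph := FHGraph
  { fhg_carrier : Type; fhg_edges : set (fhg_carrier * set fhg_carrier) }.
Arguments fhg_edges : clear implicits.

Record fhgraph_hom (X Y : fhgraph) := FHGHom {
  fhh_fun :> fhg_carrier X -> fhg_carrier Y;
  fhh_prop : forall a V, fhg_edges X (a, V) ->
                         fhg_edges Y (fhh_fun a, fhh_fun @` V) }.

Definition hg_id (X : hgraph) : hgraph_hom X X.
Proof. refine (@HGHom X X id _) => U HU. by rewrite image_id. Defined.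

Definition hg_comp (X Y Z : hgraph) (g : hgraph_hom Y Z) (f : hgraph_hom X Y)
  : hgraph_hom X Z.
Proof.
refine (@HGHom X Z (hgh_fun g \o hgh_fun f) _) => U HU.
rewrite -image_comp. by apply: hgh_prop; apply: hgh_prop.
Defined.

Definition fhg_id (X : fhgraph) : fhgraph_hom X X.
Proof. refine (@FHGHom X X id _) => a V HV. by rewrite image_id. Defined.

Definition fhg_comp (X Y Z : fhgraph) (g : fhgraph_hom Y Z) (f : fhgraph_hom X Y)
  : fhgraph_hom X Z.
Proof.
refine (@FHGHom X Z (fhh_fun g \o fhh_fun f) _) => a V HV.
rewrite -image_comp. by apply: (fhh_prop g); apply: (fhh_prop f).
Defined.

Definition is_functor (Fo : hgraph -> fhgraph)
  (Fh : forall X Y : hgraph, hgraph_hom X Y -> fhgraph_hom (Fo X) (Fo Y)) : Prop :=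
  (forall X, Fh X X (hg_id X) = fhg_id (Fo X)) /\
  (forall (X Y Z : hgraph) (g : hgraph_hom Y Z) (f : hgraph_hom X Y),
      Fh X Z (hg_comp g f) = fhg_comp (Fh Y Z g) (Fh X Y f)).

Definition is_full (Fo : hgraph -> fhgraph)
  (Fh : forall X Y : hgraph, hgraph_hom X Y -> fhgraph_hom (Fo X) (Fo Y)) : Prop :=
  forall (X Y : hgraph) (g : fhgraph_hom (Fo X) (Fo Y)),
    exists f : hgraph_hom X Y, Fh X Y f = g.

Definition is_faithful (Fo : hgraph -> fhgraph)
  (Fh : forall X Y : hgraph, hgraph_hom X Y -> fhgraph_hom (Fo X) (Fo Y)) : Prop :=
  forall (X Y : hgraph) (f f' : hgraph_hom X Y), Fh X Y f = Fh X Y f' -> f = f'.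

From mathcomp Require Import all_boot classical_sets boolp.
Set Implicit Arguments.
Unset Strict Implicit.
Unset Printing Implicit Defensive.
Local Open Scope classical_set_scope.

(** Adjoin two new points [Base] and [Mark] to the vertices of a hypergraph
    and encode a hyperedge [U] as the F-edge [(Base, Mark |` U)]; the marker
    keeps the empty hyperedge apart from the F-edge [(Base, set0)].  The extra
    F-edges [(Base, set0)], [(Mark, [set Base])] and the loops [(a, [set a])]
    at old vertices are rigid: every F-hypergraph map must fix [Base] and
    [Mark] and send old vertices to old vertices, so it is induced by a unique
    map of the vertex sets, which then preserves hyperedges. *)

Inductive fpoint (A : Type) : Type := Base | Mark | Pt of A.
Arguments Base {A}.
Arguments Mark {A}.
Arguments Pt {A}.

Definition fpoint_map (A B : Type) (f : A -> B) (x : fpoint A) : fpoint B :=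
  match x with Base => Base | Mark => Mark | Pt a => Pt (f a) end.

Definition hyper_set (A : Type) (U : set A) : set (fpoint A) := Mark |` Pt @` U.

Lemma fpoint_map_hyper (A B : Type) (f : A -> B) (U : set A) :
  fpoint_map f @` hyper_set U = hyper_set (f @` U).
Proof. by rewrite /hyper_set image_setU image_set1 !image_comp. Qed.

Lemma hyper_set_inj (A : Type) : injective (@hyper_set A).
Proof.
have sub U V : hyper_set U = hyper_set V -> U `<=` V.
  move=> eUV a Ua; have : hyper_set V (Pt a) by rewrite -eUV; right; exists a.
  by case=> // -[b Vb [<-]].
by move=> U V eUV; apply/seteqP; split; apply: sub.
Qed.

Section FHGraphOf.
Variable X : hgraph.
Local Notation point := (fpoint (hg_carrier X)).

Definition fedge (e : point * set point) : Prop :=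
  let: (x, V) := e in
  match x with
  | Base => V = set0 \/ exists2 U, hg_edges X U & V = hyper_set U
  | Mark => V = [set Base]
  | Pt a => V = [set Pt a]
  end.

Definition fhg_of : fhgraph := FHGraph fedge.

Lemma fedge_set0 x : fedge (x, set0) -> x = Base.
Proof. by case: x => // [|a] /seteqP[_ /(_ _ erefl)]. Qed.

Lemma fedge_set1_Base x : fedge (x, [set Base]) -> x = Mark.
Proof.
case: x => // [[/seteqP[/(_ _ erefl)] //|[U _ /seteqP[_]]]|a /seteqP[/(_ _ erefl)] //].
by move/(_ Mark (or_introl erefl)).
Qed.

Lemma fedge_set1_self x : fedge (x, [set x]) -> exists a, x = Pt a.
Proof.
case: x => [[/seteqP[/(_ _ erefl)] //|[U _ /seteqP[_]]]|/seteqP[/(_ _ erefl)] //|a].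
  by move/(_ Mark (or_introl erefl)).
by exists a.
Qed.

Lemma fedge_hyper U : fedge (Base, hyper_set U) -> hg_edges X U.
Proof. by case=> [/seteqP[/(_ Mark (or_introl erefl))]|[V HV /hyper_set_inj ->]]. Qed.

End FHGraphOf.

Lemma fedge_map (X Y : hgraph) (f : hgraph_hom X Y) x V :
  @fedge X (x, V) -> @fedge Y (fpoint_map f x, fpoint_map f @` V).
Proof.
case: x => [[->|[U HU ->]]|->|a ->] /=; rewrite ?image_set0 ?image_set1 //.
- by left.
- by right; exists (f @` U); [exact: hgh_prop | exact: fpoint_map_hyper].
Qed.

Definition fhg_map (X Y : hgraph) (f : hgraph_hom X Y) :
  fhgraph_hom (fhg_of X) (fhg_of Y) :=
  @FHGHom (fhg_of X) (fhg_of Y) (fpoint_map f) (@fedge_map X Y f).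

Lemma hgraph_hom_ext (X Y : hgraph) (f f' : hgraph_hom X Y) : f =1 f' -> f = f'.
Proof.
case: f f' => f Hf [f' Hf'] /= /funext eff; subst f'.
by rewrite (Prop_irrelevance Hf Hf').
Qed.

Lemma fhgraph_hom_ext (X Y : fhgraph) (g g' : fhgraph_hom X Y) : g =1 g' -> g = g'.
Proof.
case: g g' => g Hg [g' Hg'] /= /funext egg; subst g'.
by rewrite (Prop_irrelevance Hg Hg').
Qed.

Lemma fhg_map_id (X : hgraph) : fhg_map (hg_id X) = fhg_id (fhg_of X).
Proof. by apply: fhgraph_hom_ext => -[]. Qed.

Lemma fhg_map_comp (X Y Z : hgraph) (g : hgraph_hom Y Z) (f : hgraph_hom X Y) :
  fhg_map (hg_comp g f) = fhg_comp (fhg_map g) (fhg_map f).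
Proof. by apply: fhgraph_hom_ext => -[]. Qed.

Lemma fhg_map_inj (X Y : hgraph) : injective (@fhg_map X Y).
Proof.
move=> f f' eff; apply: hgraph_hom_ext => a.
by have [] : fhg_map f (Pt a) = fhg_map f' (Pt a) by rewrite eff.
Qed.

Section FHGraphHom.
Variables (X Y : hgraph) (g : fhgraph_hom (fhg_of X) (fhg_of Y)).

Lemma fhg_hom_Base : g Base = Base.
Proof.
have := fhh_prop (a := Base) (V := set0) g (or_introl erefl).
by rewrite image_set0 => /fedge_set0.
Qed.

Lemma fhg_hom_Mark : g Mark = Mark.
Proof.
have := fhh_prop (a := Mark) (V := [set Base]) g erefl.
by rewrite image_set1 fhg_hom_Base => /fedge_set1_Base.
Qed.

Lemma fhg_hom_Pt a : exists b, g (Pt a) = Pt b.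
Proof.
have := fhh_prop (a := Pt a) (V := [set Pt a]) g erefl.
by rewrite image_set1 => /fedge_set1_self.
Qed.

Lemma fhg_hom_fpoint_map : exists f : hg_carrier X -> hg_carrier Y, g =1 fpoint_map f.
Proof.
have [f gf] := choice fhg_hom_Pt.
by exists f => -[||a] /=; rewrite ?fhg_hom_Base ?fhg_hom_Mark ?gf.
Qed.

Lemma fhg_map_full : exists f : hgraph_hom X Y, fhg_map f = g.
Proof.
have [f gf] := fhg_hom_fpoint_map.
have fP U : hg_edges X U -> hg_edges Y (f @` U).
  move=> HU; apply: fedge_hyper.
  have := fhh_prop (a := Base) (V := hyper_set U) g (or_intror (ex_intro2 _ _ U HU erefl)).
  by rewrite (funext gf) fpoint_map_hyper.
by exists (HGHom fP); apply: fhgraph_hom_ext => x; rewrite gf.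
Qed.

End FHGraphHom.

Theorem proposition3p5 :
  exists (Fo : hgraph -> fhgraph)
         (Fh : forall X Y : hgraph, hgraph_hom X Y -> fhgraph_hom (Fo X) (Fo Y)),
    [/\ is_functor Fh, is_full Fh & is_faithful Fh].
Proof.
exists fhg_of, fhg_map; split.
- by split; [exact: fhg_map_id | exact: fhg_map_comp].
- exact: fhg_map_full.
- exact: fhg_map_inj.
Qed.
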